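(* Fix $l\in[r]$. Let $|\Psi_{l-1}\rangle=F_{\beta_{l-1}}(H)|\Psi\rangle/\|F_{\beta_{l-1}}(H)|\Psi\rangle\|$ and $|\Psi_l\rangle=F_{\beta_l}(H)|\Psi\rangle/\|F_{\beta_l}(H)|\Psi\rangle\|$ be the ideal input and output states of the $l$-th fragment, and let the actual input be $|\tilde\Psi_{l-1}\rangle=|\Psi_{l-1}\rangle+|\Xi_{l-1}\rangle$ with $\varepsilon_{l-1}:=\||\Xi_{l-1}\rangle\|$. Let $U$ be an $(\varepsilon'_l,\alpha_l)$-block-encoding of $F_{\Delta\beta_l}(H)$ with $\|\langle0|U|0\rangle-\alpha_lF_{\Delta\beta_l}(H)\|=\varepsilon'_l$, and write the actual post-selected output as $|\tilde\Psi_l\rangle=\frac{\langle0|U|0\rangle|\tilde\Psi_{l-1}\rangle}{\|\langle0|U|0\rangle|\tilde\Psi_{l-1}\rangle\|}=|\Psi_l\rangle+|\Xi_l\rangle$. If $\varepsilon_{l-1}+\varepsilon'_l\le\varepsilon_l\,\|\alpha_lF_{\Delta\beta_l}(H)|\Psi_{l-1}\rangle\|/2$ and $\varepsilon_l\ll1$, then $\||\Xi_l\rangle\|=\mathcal{O}(\varepsilon_l)$.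
   Context: $H$ is a Hamiltonian with $\|H\|\le1$ and smallest eigenvalue $\lambda_{\min}$; $F_b(H)=e^{-b(H-\lambda_{\min})}$. $|\Psi\rangle$ is a unit vector, $\Delta\beta_1,\dots,\Delta\beta_r>0$, $\beta_0=0$, $\beta_l=\sum_{k\le l}\Delta\beta_k$, $\alpha_l\in(0,1]$. A unitary $U$ on $\mathbb{H}_\mathcal{S}\otimes\mathbb{H}_\mathcal{A}$ is an $(\varepsilon,\alpha)$-block-encoding of $A$ if $\|\alpha A-\langle0|U|0\rangle\|\le\varepsilon$ for some $|0\rangle\in\mathbb{H}_\mathcal{A}$. *)

From HB Require Import structures.
From mathcomp Require Import all_boot all_order all_algebra.
From mathcomp Require Import complex.
From mathcomp Require Import all_classical all_reals.
From mathcomp Require Import all_analysis.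
Set Implicit Arguments. Unset Strict Implicit. Unset Printing Implicit Defensive.
Import Order.TTheory GRing.Theory Num.Theory.
Local Open Scope ring_scope.
Local Open Scope complex_scope.

Section QDefs.
Variable R : realType.
Local Notation C := R[i].

Definition vnorm n (x : 'cV[C]_n) : R :=
  Num.sqrt (\sum_i (complex.Re (x i 0) ^+ 2 + complex.Im (x i 0) ^+ 2)).

Definition opnorm m n (A : 'M[C]_(m, n)) : R :=
  sup [set vnorm (A *m x) | x in [set x : 'cV[C]_n | vnorm x = 1]]%classic.

Definition adj m n (A : 'M[C]_(m, n)) : 'M[C]_(n, m) := (map_mx conjc A)^T.

Definition unitary_mx n (V : 'M[C]_n) : Prop := adj V *m V = 1%:M.

Definition normalize n (x : 'cV[C]_n) : 'cV[C]_n := ((vnorm x)^-1)%:C *: x.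

(* Spectral functional calculus: for H = V diag(d) V^dagger,
   f(H) = V diag(f(d)) V^dagger. *)
Definition fcalc n (V : 'M[C]_n) (d : 'I_n -> R) (f : R -> R) : 'M[C]_n :=
  V *m diag_mx (\row_i (f (d i))%:C) *m adj V.

Definition Fb n (V : 'M[C]_n) (d : 'I_n -> R) (lmin b : R) : 'M[C]_n :=
  fcalc V d (fun x => expR (- (b * (x - lmin)))).

Definition beta (dbeta : nat -> R) (l : nat) : R := \sum_(1 <= k < l.+1) dbeta k.

(* The system-block <0| U |0> of a unitary U on H_S (x) H_A, H_S = C^n,
   H_A = C^m, the index (i,a) of H_S (x) H_A being mxvec_index i a. *)
Definition block n m (U : 'M[C]_(n * m)) (z : 'cV[C]_m) : 'M[C]_n :=
  \matrix_(i, j) \sum_a \sum_b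
     conjc (z a 0) * U (mxvec_index i a) (mxvec_index j b) * z b 0.

End QDefs.

From HB Require Import structures.
From mathcomp Require Import all_boot all_order all_algebra.
From mathcomp Require Import complex.
From mathcomp Require Import all_classical all_reals all_analysis.
From mathcomp Require Import ring lra.
Import Order.TTheory GRing.Theory Num.Theory.
Local Open Scope ring_scope.
Local Open Scope complex_scope.
Set Implicit Arguments. Unset Strict Implicit. Unset Printing Implicit Defensive.

(* Since F_a(H) F_b(H) = F_(a+b)(H), the ideal output |Psi_l> is the
   normalisation of a := alpha_l F_(Delta beta_l)(H) |Psi_(l-1)>, while the
   actual output normalises y := <0|U|0> (|Psi_(l-1)> + |Xi_(l-1)>).  As
   alpha_l F_(Delta beta_l)(H) is a contraction, |y - a| <= eps'_l (1 + eps_(l-1))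
   + eps_(l-1), and normalisation is (2 / |a|)-Lipschitz at a, so
   |Xi_l| <= 2 |y - a| / |a|, which the hypothesis bounds by (3/2) eps_l. *)

Section VectorNorm.
Variable R : realType.
Local Notation C := R[i].
Local Notation Re := complex.Re.
Local Notation Im := complex.Im.

Definition sqnorm n (x : 'cV[C]_n) : R :=
  \sum_i (Re (x i 0) ^+ 2 + Im (x i 0) ^+ 2).

Definition rdot n (x y : 'cV[C]_n) : R :=
  \sum_i (Re (x i 0) * Re (y i 0) + Im (x i 0) * Im (y i 0)).

Lemma sqnorm_ge0 n (x : 'cV[C]_n) : 0 <= sqnorm x.
Proof. by apply: sumr_ge0 => i _; rewrite addr_ge0 ?sqr_ge0. Qed.

Lemma vnormE n (x : 'cV[C]_n) : vnorm x = Num.sqrt (sqnorm x).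
Proof. by []. Qed.

Lemma vnorm_ge0 n (x : 'cV[C]_n) : 0 <= vnorm x.
Proof. exact: sqrtr_ge0. Qed.

Lemma vnorm_sqr n (x : 'cV[C]_n) : vnorm x ^+ 2 = sqnorm x.
Proof. by rewrite vnormE sqr_sqrtr ?sqnorm_ge0. Qed.

Lemma sqnorm_eq0 n (x : 'cV[C]_n) : sqnorm x = 0 -> x = 0.
Proof.
move/eqP; rewrite psumr_eq0 => [/allP x0|i _]; last by rewrite addr_ge0 ?sqr_ge0.
apply/matrixP => i j; rewrite ord1 mxE.
move: (x0 i (mem_index_enum i)); case: (x i 0) => a b /= /eqP ab0.
have -> : a = 0 by nra.
by have -> : b = 0 by nra.
Qed.

Lemma vnorm_eq0 n (x : 'cV[C]_n) : vnorm x = 0 -> x = 0.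
Proof. by move=> x0; apply: sqnorm_eq0; rewrite -vnorm_sqr x0 expr0n. Qed.

Lemma vnorm0 n : vnorm (0 : 'cV[C]_n) = 0.
Proof.
by rewrite vnormE /sqnorm big1 ?sqrtr0 // => i _; rewrite mxE expr0n addr0.
Qed.

Lemma vnorm_gt0 n (x : 'cV[C]_n) : x != 0 -> 0 < vnorm x.
Proof.
move=> x0; rewrite lt0r vnorm_ge0 andbT.
by apply: contra x0 => /eqP/vnorm_eq0 ->.
Qed.

Lemma sqnormD n (x y : 'cV[C]_n) : sqnorm (x + y) = sqnorm x + 2 * rdot x y + sqnorm y.
Proof.
rewrite /sqnorm /rdot mulr_sumr -!big_split; apply: eq_bigr => i _.
by rewrite !mxE; case: (x i 0) => a b; case: (y i 0) => c d /=; ring.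
Qed.

Lemma sqnormZ n (c : C) (x : 'cV[C]_n) :
  sqnorm (c *: x) = (Re c ^+ 2 + Im c ^+ 2) * sqnorm x.
Proof.
rewrite /sqnorm mulr_sumr; apply: eq_bigr => i _.
by rewrite !mxE; case: c => a b; case: (x i 0) => u v /=; ring.
Qed.

Lemma rdotZr n (t : R) (x y : 'cV[C]_n) : rdot x (t%:C *: y) = t * rdot x y.
Proof.
rewrite /rdot mulr_sumr; apply: eq_bigr => i _.
by rewrite !mxE; case: (x i 0) => a b; case: (y i 0) => u v /=; ring.
Qed.

Lemma rdot_CauchySchwarz n (x y : 'cV[C]_n) : rdot x y ^+ 2 <= sqnorm x * sqnorm y.
Proof.
have [y0|y0] := eqVneq (sqnorm y) 0.
  rewrite y0 mulr0 (sqnorm_eq0 y0) /rdot big1 ?expr0n // => i _.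
  by rewrite mxE /= !mulr0 addr0.
have y_gt0 : 0 < sqnorm y by rewrite lt0r y0 sqnorm_ge0.
(* minimise sqnorm (x + t y) over t *)
pose t := - (rdot x y / sqnorm y).
have := sqnorm_ge0 (x + t%:C *: y).
rewrite sqnormD rdotZr sqnormZ /= expr0n addr0.
have -> : sqnorm x + 2 * (t * rdot x y) + t ^+ 2 * sqnorm y =
          (sqnorm x * sqnorm y - rdot x y ^+ 2) / sqnorm y.
  by rewrite /t; field.
by rewrite pmulr_lge0 ?invr_gt0 // subr_ge0.
Qed.

Lemma vnormD n (x y : 'cV[C]_n) : vnorm (x + y) <= vnorm x + vnorm y.
Proof.
have x_ge0 := vnorm_ge0 x; have y_ge0 := vnorm_ge0 y.
have xy_ge0 := vnorm_ge0 (x + y).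
have rdot_le : rdot x y <= vnorm x * vnorm y.
  have := rdot_CauchySchwarz x y; rewrite -!vnorm_sqr -exprMn.
  have := mulr_ge0 x_ge0 y_ge0; nra.
have := vnorm_sqr (x + y); rewrite sqnormD -!vnorm_sqr; nra.
Qed.

Lemma vnorm_sum n I (r : seq I) (F : I -> 'cV[C]_n) :
  vnorm (\sum_(j <- r) F j) <= \sum_(j <- r) vnorm (F j).
Proof.
elim/big_ind2 : _ => [|x1 x2 y1 y2 le1 le2|//]; first by rewrite vnorm0.
exact: le_trans (vnormD _ _) (lerD le1 le2).
Qed.

Lemma vnormZ n (c : C) (x : 'cV[C]_n) :
  vnorm (c *: x) = Num.sqrt (Re c ^+ 2 + Im c ^+ 2) * vnorm x.
Proof. by rewrite !vnormE sqnormZ sqrtrM // addr_ge0 ?sqr_ge0. Qed.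

Lemma vnormZr n (t : R) (x : 'cV[C]_n) : vnorm (t%:C *: x) = `|t| * vnorm x.
Proof. by rewrite vnormZ /= expr0n addr0 sqrtr_sqr. Qed.

Lemma vnormN n (x : 'cV[C]_n) : vnorm (- x) = vnorm x.
Proof.
have -> : - x = (-1)%:C *: x by rewrite rmorphN1 scaleN1r.
by rewrite vnormZr normrN1 mul1r.
Qed.

Lemma vnormBC n (x y : 'cV[C]_n) : vnorm (x - y) = vnorm (y - x).
Proof. by rewrite -vnormN opprB. Qed.

Lemma vnorm_normalize n (x : 'cV[C]_n) : x != 0 -> vnorm (normalize x) = 1.
Proof.
move=> /vnorm_gt0 x_gt0.
by rewrite vnormZr ger0_norm ?invr_ge0 ?vnorm_ge0 // mulVf ?gt_eqF.
Qed.

Lemma normalizeZ n (t : R) (x : 'cV[C]_n) : 0 < t -> normalize (t%:C *: x) = normalize x.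
Proof.
move=> t_gt0; rewrite /normalize vnormZr gtr0_norm // scalerA -rmorphM /=.
by rewrite invfM mulrAC mulVf ?gt_eqF // mul1r.
Qed.

Lemma vnorm_normalizeB n (y a : 'cV[C]_n) : a != 0 ->
  vnorm (normalize y - normalize a) <= 2 * vnorm (y - a) / vnorm a.
Proof.
move=> /vnorm_gt0 a_gt0.
have y_ge0 := vnorm_ge0 y; have ya_ge0 := vnorm_ge0 (y - a).
have -> : normalize y - normalize a =
    ((vnorm y)^-1 - (vnorm a)^-1)%:C *: y + ((vnorm a)^-1)%:C *: (y - a).
  by rewrite /normalize rmorphB /= scalerBl scalerBr addrA subrK.
apply: le_trans (vnormD _ _) _; rewrite !vnormZr.
rewrite [`|(vnorm a)^-1|]ger0_norm ?invr_ge0 ?vnorm_ge0 //.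
have rescale_le : `|(vnorm y)^-1 - (vnorm a)^-1| * vnorm y <= vnorm (y - a) / vnorm a.
  have [->|y0] := eqVneq (vnorm y) 0; first by rewrite mulr0 divr_ge0 // ltW.
  have y_gt0 : 0 < vnorm y by rewrite lt0r y0.
  have -> : (vnorm y)^-1 - (vnorm a)^-1 = (vnorm a - vnorm y) / vnorm a / vnorm y.
    by field; rewrite y0 gt_eqF.
  rewrite normrM normfV (gtr0_norm y_gt0) divfK // normrM normfV (gtr0_norm a_gt0).
  apply: ler_wpM2r; first by rewrite invr_ge0 ltW.
  (* reverse triangle inequality *)
  have := vnormD (y - a) a; have := vnormD (a - y) y.
  rewrite !subrK (vnormBC a y) ler_norml; lra.
rewrite mulrC [_ / vnorm a]mulrC in rescale_le *; lra.
Qed.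

End VectorNorm.

Section OperatorNorm.
Variable R : realType.
Local Notation C := R[i].

Lemma mulmx_sum_col m n (M : 'M[C]_(m, n)) (x : 'cV[C]_n) :
  M *m x = \sum_j x j 0 *: col j M.
Proof.
apply/matrixP => i k; rewrite ord1 !mxE summxE; apply: eq_bigr => j _.
by rewrite !mxE mulrC.
Qed.

Lemma opnorm_has_ubound m n (M : 'M[C]_(m, n)) :
  has_ubound [set vnorm (M *m x) | x in [set x : 'cV[C]_n | vnorm x = 1]]%classic.
Proof.
exists (\sum_j vnorm (col j M)) => _ [x /= x1 <-].
rewrite mulmx_sum_col; apply: le_trans (vnorm_sum _ _) _.
apply: ler_sum => j _; rewrite vnormZ ler_piMl ?vnorm_ge0 //.
rewrite -sqrtr1 ler_sqrt // -(expr1n _ 2) -x1 vnorm_sqr /sqnorm (bigD1 j) //=.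
by rewrite lerDl sumr_ge0 // => i _; rewrite addr_ge0 ?sqr_ge0.
Qed.

Lemma vnorm_mulmx_le m n (M : 'M[C]_(m, n)) (x : 'cV[C]_n) :
  vnorm (M *m x) <= opnorm M * vnorm x.
Proof.
have [->|x0] := eqVneq x 0; first by rewrite mulmx0 !vnorm0 mulr0.
have x_gt0 := vnorm_gt0 x0.
have x_eq : x = (vnorm x)%:C *: normalize x.
  by rewrite /normalize scalerA -rmorphM /= mulfV ?gt_eqF // scale1r.
rewrite [in M *m x]x_eq -scalemxAr vnormZr ger0_norm ?vnorm_ge0 //.
rewrite mulrC ler_wpM2r ?vnorm_ge0 //.
apply: ub_le_sup; first exact: opnorm_has_ubound.
by exists (normalize x); rewrite /= ?vnorm_normalize.
Qed.

Lemma opnorm_ge0 m n (M : 'M[C]_(m, n)) : 0 <= opnorm M.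
Proof.
rewrite /opnorm; set E := (X in sup X).
have [->|/set0P [y Ey]] := eqVneq E set0; first by rewrite sup0.
apply: le_trans (ub_le_sup (opnorm_has_ubound M) Ey).
by case: Ey => x _ <-; apply: vnorm_ge0.
Qed.

End OperatorNorm.

Section Adjoint.
Variable R : realType.
Local Notation C := R[i].

Lemma adj_mul m p q (A : 'M[C]_(m, p)) (B : 'M[C]_(p, q)) : adj (A *m B) = adj B *m adj A.
Proof. by rewrite /adj map_mxM trmx_mul. Qed.

Lemma adjK m p (A : 'M[C]_(m, p)) : adj (adj A) = A.
Proof. by apply/matrixP => i j; rewrite !mxE conjcK. Qed.

Lemma sqnorm_adj n (x : 'cV[C]_n) : sqnorm x = complex.Re ((adj x *m x) 0 0).
Proof.
rewrite !mxE raddf_sum; apply: eq_bigr => i _.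
by rewrite !mxE; case: (x i 0) => a b /=; ring.
Qed.

Lemma sqnorm_isometry n (W : 'M[C]_n) (x : 'cV[C]_n) :
  unitary_mx W -> sqnorm (W *m x) = sqnorm x.
Proof.
by move=> W_unitary; rewrite !sqnorm_adj adj_mul mulmxA -(mulmxA (adj x)) W_unitary mulmx1.
Qed.

Lemma sqnorm_diag_contraction n (f : 'I_n -> R) (x : 'cV[C]_n) :
  (forall i, 0 <= f i <= 1) -> sqnorm (diag_mx (\row_i (f i)%:C) *m x) <= sqnorm x.
Proof.
move=> f01; rewrite /sqnorm mul_diag_mx; apply: ler_sum => i _.
rewrite !mxE; have /andP[f0 f1] := f01 i; case: (x i 0) => a b /=.
rewrite !mul0r subr0 addr0 !exprMn -mulrDr ler_piMl ?addr_ge0 ?sqr_ge0 //.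
by rewrite expr_le1.
Qed.

End Adjoint.

Section SpectralCalculus.
Variable R : realType.
Local Notation C := R[i].
Variables (n : nat) (V : 'M[C]_n) (d : 'I_n -> R) (lmin : R).
Hypothesis V_unitary : unitary_mx V.

Lemma vnorm_Fb_le b (x : 'cV[C]_n) : (forall i, lmin <= d i) -> 0 <= b ->
  vnorm (Fb V d lmin b *m x) <= vnorm x.
Proof.
move=> d_ge b_ge0; rewrite !vnormE ler_sqrt ?sqnorm_ge0 //.
rewrite /Fb /fcalc -!mulmxA sqnorm_isometry //.
have adjV_unitary : unitary_mx (adj V) by rewrite /unitary_mx adjK mulmx1C.
rewrite -[X in _ <= X](sqnorm_isometry _ adjV_unitary).
apply: sqnorm_diag_contraction => i; rewrite expR_ge0 expR_le1 oppr_le0.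
by rewrite mulr_ge0 // subr_ge0.
Qed.

Lemma FbD b1 b2 : Fb V d lmin b1 *m Fb V d lmin b2 = Fb V d lmin (b1 + b2).
Proof.
rewrite /Fb /fcalc -!mulmxA (mulmxA (adj V)) V_unitary mul1mx.
rewrite (mulmxA (diag_mx _)) mulmx_diag !mulmxA.
congr (_ *m _ *m _); congr diag_mx; apply/matrixP => i j.
by rewrite !mxE -rmorphM /= -expRD mulrDl opprD.
Qed.

Lemma Fb0 : Fb V d lmin 0 = 1%:M.
Proof.
rewrite /Fb /fcalc.
have -> : \row_i (expR (- (0 * (d i - lmin))))%:C = const_mx (1 : C).
  by apply/matrixP => i j; rewrite !mxE mul0r oppr0 expR0.
by rewrite diag_const_mx mulmx1 mulmx1C.
Qed.

Lemma Fb_mulmx_eq0 b (x : 'cV[C]_n) : Fb V d lmin b *m x = 0 -> x = 0.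
Proof.
move=> Fx0; have : Fb V d lmin (- b) *m (Fb V d lmin b *m x) = 0 by rewrite Fx0 mulmx0.
by rewrite mulmxA FbD addNr Fb0 mul1mx.
Qed.

Lemma vnorm_scaled_Fb_le (al b : R) (x : 'cV[C]_n) :
  (forall i, lmin <= d i) -> 0 <= b -> 0 <= al <= 1 ->
  vnorm ((al%:C *: Fb V d lmin b) *m x) <= vnorm x.
Proof.
move=> d_ge b_ge0 /andP[al_ge0 al_le1].
rewrite -scalemxAl vnormZr ger0_norm //.
by rewrite (le_trans _ (vnorm_Fb_le x d_ge b_ge0)) // ler_piMl ?vnorm_ge0.
Qed.

End SpectralCalculus.

Lemma beta_recr (R : realType) (dbeta : nat -> R) l :
  (0 < l)%N -> beta dbeta l = beta dbeta l.-1 + dbeta l.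
Proof. by case: l => // l _; rewrite /beta big_nat_recr. Qed.

Section Perturbation.
Variable R : realType.
Local Notation C := R[i].
Variables (m n : nat) (A B : 'M[C]_(m, n)).
Hypothesis A_contraction : forall x, vnorm (A *m x) <= vnorm x.

Lemma vnorm_perturbed_image (p xi : 'cV[C]_n) :
  vnorm (B *m (p + xi) - A *m p) <= opnorm (B - A) * (vnorm p + vnorm xi) + vnorm xi.
Proof.
have -> : B *m (p + xi) - A *m p = (B - A) *m (p + xi) + A *m xi.
  by rewrite mulmxBl (mulmxDr A) opprD addrA subrK.
apply: le_trans (vnormD _ _) (lerD _ (A_contraction xi)).
apply: le_trans (vnorm_mulmx_le _ _) _.
by rewrite ler_wpM2l ?opnorm_ge0 ?vnormD.
Qed.

Lemma normalize_perturbation (p xi : 'cV[C]_n) (eps : R) :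
  vnorm p = 1 -> A *m p != 0 ->
  vnorm xi + opnorm (B - A) <= eps * vnorm (A *m p) / 2 -> eps <= 1 ->
  vnorm (normalize (B *m (p + xi)) - normalize (A *m p)) <= 2 * eps.
Proof.
move=> p1 Ap0 small eps_le1.
apply: le_trans (vnorm_normalizeB _ Ap0) _.
have w_gt0 := vnorm_gt0 Ap0.
rewrite ler_pdivrMr // -mulrA ler_pM2l //.
have w_le1 : vnorm (A *m p) <= 1 by rewrite -p1.
have e_ge0 := vnorm_ge0 xi.
have e'_ge0 := opnorm_ge0 (B - A).
have := vnorm_perturbed_image p xi; rewrite p1.
set w := vnorm (A *m p) in w_gt0 w_le1 small *.
set e := vnorm xi in e_ge0 small *; set e' := opnorm (B - A) in e'_ge0 small *.
have eps_ge0 : 0 <= eps by rewrite -(pmulr_lge0 _ w_gt0); lra.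
have e_le_half : e <= 1 / 2 by nra.
have cross_term : e' * e <= e' / 2 by nra.
nra.
Qed.

End Perturbation.

Theorem lemma9 (R : realType) :
  exists K c : R, 0 < c /\
  forall (n m : nat) (H V : 'M[R[i]]_n) (d : 'I_n -> R) (lmin : R),
    unitary_mx V -> H = fcalc V d id -> opnorm H <= 1 ->
    (exists i, d i = lmin) -> (forall i, lmin <= d i) ->
  forall Psi : 'cV[R[i]]_n, vnorm Psi = 1 ->
  forall (r : nat) (dbeta alpha : nat -> R),
    (forall k, (1 <= k <= r)%N -> 0 < dbeta k) ->
    (forall k, (1 <= k <= r)%N -> 0 < alpha k <= 1) ->
  forall l : nat, (1 <= l <= r)%N ->
  forall (Xi_prev : 'cV[R[i]]_n) (U : 'M[R[i]]_(n * m)) (z : 'cV[R[i]]_m),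
    unitary_mx U -> vnorm z = 1 ->
  forall eps_l : R,
  let Psi_prev := normalize (Fb V d lmin (beta dbeta l.-1) *m Psi) in
  let Psi_l := normalize (Fb V d lmin (beta dbeta l) *m Psi) in
  let A := (alpha l)%:C *: Fb V d lmin (dbeta l) in
  let eps_prev := vnorm Xi_prev in
  let eps'_l := opnorm (block U z - A) in
  let Psi_tilde_l := normalize (block U z *m (Psi_prev + Xi_prev)) in
  let Xi_l := Psi_tilde_l - Psi_l in
    eps_prev + eps'_l <= eps_l * vnorm (A *m Psi_prev) / 2 ->
    eps_l <= c ->
    vnorm Xi_l <= K * eps_l.
Proof.
exists 2, 1; split => // n m H V d lmin V_unitary _ _ _ d_ge Psi Psi1 r dbeta alpha
  dbeta_gt0 alpha_01 l l_range Xi U z _ _ eps Psi_prev Psi_l A e e' Psi_t Xi_l.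
have /andP[l_gt0 _] := l_range.
have /andP[al_gt0 al_le1] := alpha_01 l l_range.
have Psi0 : Psi != 0.
  by apply/eqP => Psi_eq0; move: Psi1; rewrite Psi_eq0 vnorm0 => /eqP; rewrite eq_sym oner_eq0.
have FbPsi0 b : Fb V d lmin b *m Psi != 0.
  by apply: contra Psi0 => /eqP/Fb_mulmx_eq0 ->.
set P := Fb V d lmin (beta dbeta l.-1) *m Psi.
have scale_gt0 : 0 < alpha l / vnorm P by rewrite divr_gt0 // vnorm_gt0 ?FbPsi0.
have APsi_prev :
    A *m Psi_prev = (alpha l / vnorm P)%:C *: (Fb V d lmin (beta dbeta l) *m Psi).
  rewrite /A /Psi_prev /normalize -/P -scalemxAl -scalemxAr scalerA -rmorphM.
  by rewrite /P mulmxA (FbD d lmin V_unitary) addrC -(beta_recr dbeta l_gt0).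
rewrite /Xi_l /Psi_t /Psi_l.
rewrite -(normalizeZ (Fb V d lmin (beta dbeta l) *m Psi) scale_gt0) -APsi_prev.
apply: normalize_perturbation.
- move=> x; apply: vnorm_scaled_Fb_le => //; first exact/ltW/dbeta_gt0.
  by rewrite ltW.
- exact: vnorm_normalize (FbPsi0 _).
- by rewrite APsi_prev scaler_eq0 negb_or FbPsi0 andbT fmorph_eq0 gt_eqF.
Qed.
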